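(* Let $Q$ be a quiver, let $C\subseteq\Bbbk Q$ be a monomial subcoalgebra, and let $I\subseteq C$ be a left $C^*$-submodule of $C$ that embeds (as a left $C^*$-module) in a free left $C^*$-module. Let $e\in I$ be a vertex. Then there exists a path $p\in C$ such that: (i) for every path $q\in I$ starting at $e$, $p=qp'$ for some path $p'\in C$; (ii) for every non-trivial path $r\in C$ ending at $e$, $rp\notin C$.
   Context: $\Bbbk$ is a field. The path coalgebra $\Bbbk Q$ has basis all paths of $Q$ (including trivial paths, identified with vertices), with $\Delta(p)=\sum_{xy=p}x\otimes y$ where $xy$ denotes concatenation ($x$ followed by $y$, defined when the target of $x$ is the source of $y$), and $\varepsilon(p)=1$ if $p$ is trivial, $0$ otherwise. A subcoalgebra $C\subseteq\Bbbk Q$ is monomial if it contains all vertices and arrows of $Q$ and has a linear basis consisting of paths. The dual algebra $C^*$ has product $(fg)(x)=\sum f(x_1)g(x_2)$ and $C$ is a left $C^*$-module via $f\rightharpoonup x=\sum x_1f(x_2)$. *)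

From HB Require Import structures.
From mathcomp Require Import all_boot all_order all_algebra.
From mathcomp Require Import finmap.
From mathcomp Require Import monalg.
From Stdlib Require List.
Set Implicit Arguments. Unset Strict Implicit. Unset Printing Implicit Defensive.
Import GRing.Theory.
Local Open Scope ring_scope.

(* A path word is a pair (v, [:: a1; ...; an]): the starting
   vertex and the list of arrows; it is a path when it is composable. *)
Section Quiver.
Variables (V A : choiceType) (s t : A -> V).

Definition word := (V * seq A)%type.

Definition is_path (w : word) : bool :=
  match w.2 with
  | [::] => true
  | a :: l => (s a == w.1) && path (fun a b => t a == s b) a l
  end.

Definition psrc (w : word) : V := w.1.
Definition ptgt (w : word) : V := last w.1 (map t w.2).
Definition trivial_path (v : V) : word := (v, [::]).
Definition nontrivial (w : word) : bool := w.2 != [::].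

(* concatenation x y (x followed by y, meaningful when ptgt x = psrc y) *)
Definition concat (x y : word) : word := (x.1, x.2 ++ y.2).

Definition splits (p : word) : seq (word * word) :=
  [seq ((p.1, take i p.2), (ptgt (p.1, take i p.2), drop i p.2))
  | i <- iota 0 (size p.2).+1].

Variable k : fieldType.

(* the path coalgebra kQ (ambient: finitely supported combinations of words;
   only combinations of paths matter) and its tensor square *)
Definition kQ := {malg k[word]}.
Definition kQ2 := {malg k[(word * word)%type]}.

Definition Delta (x : kQ) : kQ2 :=
  \sum_(p <- msupp x) x@_p *: \sum_(xy <- splits p) << xy >>.

Variable inC : pred word.   (* the set of paths spanning C *)

Definition in_C (x : kQ) : Prop := forall p, p \in msupp x -> inC p.
Definition in_CC (z : kQ2) : Prop :=
  forall pq, pq \in msupp z -> inC pq.1 /\ inC pq.2.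

Definition monomial_subcoalgebra : Prop :=
  [/\ forall p, inC p -> is_path p,
      forall v, inC (trivial_path v),
      forall a, inC (s a, [:: a])
    & forall x, in_C x -> in_CC (Delta x)].

(* The dual algebra of C: functionals on C, i.e. functions on the basis paths
   (values outside inC are irrelevant).  Equality in the dual: *)
Definition dual := word -> k.
Definition dual_eq (f g : dual) : Prop := forall p, inC p -> f p = g p.

Definition dual_mul (f g : dual) : dual :=
  fun p => \sum_(xy <- splits p) f xy.1 * g xy.2.
Definition dual_add (f g : dual) : dual := fun p => f p + g p.

Definition act (f : dual) (x : kQ) : kQ :=
  \sum_(p <- msupp x) x@_p *: \sum_(xy <- splits p) f xy.2 *: << xy.1 >>.

Definition left_submodule (I : kQ -> Prop) : Prop :=
  [/\ forall x, I x -> in_C x,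
      I 0,
      forall x y, I x -> I y -> I (x + y)
    & forall f x, I x -> I (act f x)].

(* I embeds, as a left module over the dual algebra, in a free module
   = finitely supported families J -> dual. *)
Definition embeds_in_free (I : kQ -> Prop) : Prop :=
  exists (J : Type) (phi : kQ -> J -> dual),
    [/\ forall x, I x -> exists js : seq J,
          forall j, ~ List.In j js -> dual_eq (phi x j) (fun _ => 0),
        forall x y, I x -> I y -> forall j,
          dual_eq (phi (x + y) j) (dual_add (phi x j) (phi y j)),
        forall f x, I x -> forall j,
          dual_eq (phi (act f x) j) (dual_mul f (phi x j))
      & forall x y, I x -> I y -> (forall j, dual_eq (phi x j) (phi y j)) ->
          x = y].

End Quiver.

From HB Require Import structures.
From mathcomp Require Import all_boot all_order all_algebra.
From mathcomp Require Import finmap.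
From mathcomp Require Import monalg.
From mathcomp Require Import zify.
From Stdlib Require Import Classical.
Set Implicit Arguments. Unset Strict Implicit. Unset Printing Implicit Defensive.
Import GRing.Theory.
Local Open Scope ring_scope.

(* Let phi embed I into the free C^*-module with basis J, and pick a
   coordinate j and a path p with phi(e)_j(p) <> 0.  For a path q of I
   starting at e we have delta_q -> q = e, hence phi(e)_j = delta_q * phi(q)_j;
   evaluating at p forces p to split as q p'.  For a non-trivial r ending at e
   we have delta_r -> e = 0, while (delta_r * phi(e)_j)(r p) = phi(e)_j(p) <> 0,
   so r p cannot be a path of C. *)

Section MalgUnit.
Variables (K : choiceType) (k : fieldType).

Lemma msupp_unit (w : K) : msupp (<< w >> : {malg k[K]}) = [fset w]%fset.
Proof. by rewrite msuppU oner_eq0. Qed.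

Lemma mcoeff_unit (w w' : K) : (<< w >> : {malg k[K]})@_w' = (w == w')%:R.
Proof. exact: mcoeffU. Qed.

End MalgUnit.

Section PathDual.
Variables (V A : choiceType) (t : A -> V) (k : fieldType).
Implicit Types (p q r : word V A) (g : dual V A k).

Definition delta (w : word V A) : dual V A k := fun u => if u == w then 1 else 0.

Lemma splits_uniq p : uniq (splits t p).
Proof.
rewrite map_inj_in_uniq ?iota_uniq // => i i'.
rewrite !mem_iota !ltnS => /andP [_ hi] /andP [_ hi'] [/(congr1 size) + _ _].
by rewrite !size_takel.
Qed.

Lemma splitsP p xy : xy \in splits t p ->
  psrc xy.2 = ptgt t xy.1 /\ concat xy.1 xy.2 = p.
Proof. by case: p => v l /mapP [i _ ->]; rewrite /concat cat_take_drop. Qed.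

Lemma act_delta_unit q : act t (delta q) << q >> = << trivial_path A (psrc q) >>.
Proof.
case: q => v l.
rewrite /act msupp_unit big_seq_fset1 mcoeff_unit eqxx scale1r /= big_cons big_map.
rewrite /delta /= take0 drop0 eqxx scale1r big1_seq ?addr0 // => i.
rewrite mem_iota => /andP [_ /andP [i_gt0 i_le]]; case: eqP; last by rewrite scale0r.
move=> [_ /(congr1 size)]; rewrite size_drop.
(* [lia] only recognizes [i] once it is retyped from the eqType carrier to [nat]. *)
by move: i i_gt0 i_le => /= i; lia.
Qed.

Lemma act_delta_trivial r v :
  nontrivial r -> act t (delta r) << trivial_path A v >> = 0.
Proof.
case: r => w l /negbTE hl.
rewrite /act msupp_unit big_seq_fset1 mcoeff_unit eqxx scale1r /= big_cons big_nil.
rewrite /delta; case: eqP => [[_ hl0]|_]; last by rewrite scale0r addr0.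
by rewrite -hl0 eqxx in hl.
Qed.

Lemma splits_fst_inj p : {in splits t p &, injective fst}.
Proof.
case: p => v l [x [c d]] [x' [c' d']].
move=> /splitsP [/= -> [_ hd]] /splitsP [/= -> [_ hd']] /= hx; subst x'.
congr (_, (_, _)); move: hd'; rewrite -hd => /(congr1 (drop (size x.2))).
by rewrite !drop_size_cat.
Qed.

Lemma mem_splits_concat r p :
  ptgt t r = psrc p -> (r, p) \in splits t (concat r p).
Proof.
case: r => w l; case: p => v m /= hr; apply/mapP; exists (size l).
  by rewrite mem_iota /= size_cat ltnS leq_addr.
by rewrite /= take_size_cat // drop_size_cat // hr.
Qed.

Lemma dual_mul_delta_concat r p g :
  ptgt t r = psrc p -> dual_mul t (delta r) g (concat r p) = g p.
Proof.
move=> hr; rewrite /dual_mul (bigD1_seq _ (mem_splits_concat hr)) ?splits_uniq //=.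
rewrite /delta eqxx mul1r big1_seq ?addr0 // => xy /andP [hxy xy_in].
case: eqP => [xy1|_]; last by rewrite mul0r.
by move: hxy; rewrite (splits_fst_inj xy_in (mem_splits_concat hr)) ?eqxx.
Qed.

Lemma dual_mul_delta_neq0 q g p :
  dual_mul t (delta q) g p != 0 -> exists2 xy, xy \in splits t p & xy.1 = q.
Proof.
move=> hne; have /hasP [xy hxy] : has (fun xy => delta q xy.1 * g xy.2 != 0) (splits t p).
  move: hne; apply: contraNT => /hasPn h.
  by apply/eqP/big1_seq => xy /andP [_ /h /negPn /eqP].
by rewrite /delta; case: (xy.1 =P q) => [xyq _|]; [exists xy | rewrite mul0r eqxx].
Qed.

End PathDual.

Lemma monomial_splits_inC (V A : choiceType) (s t : A -> V) (k : fieldType)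
    (inC : pred (word V A)) :
  monomial_subcoalgebra s t k inC ->
  forall p xy, inC p -> xy \in splits t p -> inC xy.1 /\ inC xy.2.
Proof.
move=> [_ _ _ HD] p xy hp hxy.
have hC : in_C inC (<< p >> : kQ V A k) by move=> w; rewrite msupp_unit inE => /eqP ->.
apply: (HD _ hC); rewrite -[_ \in _]negbK -mcoeff_eq0 /Delta.
rewrite msupp_unit big_seq_fset1 mcoeff_unit eqxx scale1r.
rewrite raddf_sum (bigD1_seq xy) ?splits_uniq //= mcoeff_unit eqxx.
rewrite big1 ?addr0 ?oner_eq0 //.
by move=> z hz; rewrite mcoeff_unit (negbTE hz).
Qed.

Section FreeEmbedding.
Variables (V A : choiceType) (k : fieldType) (inC : pred (word V A)).
Variables (I : kQ V A k -> Prop) (J : Type) (phi : kQ V A k -> J -> dual V A k).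
Hypothesis I0 : I 0.
Hypothesis phiD : forall x y, I x -> I y -> forall j,
  dual_eq inC (phi (x + y) j) (dual_add (phi x j) (phi y j)).
Hypothesis phi_inj : forall x y, I x -> I y ->
  (forall j, dual_eq inC (phi x j) (phi y j)) -> x = y.

Lemma embedding0 j p : inC p -> phi 0 j p = 0.
Proof.
move=> hp; have := phiD I0 I0 j hp; rewrite addr0 /dual_add.
by move/(congr1 (fun a => a - phi 0 j p)); rewrite addrK subrr.
Qed.

Lemma embedding_neq0 x : I x -> x != 0 -> exists j p, inC p /\ phi x j p != 0.
Proof.
move=> Ix /eqP x_neq0; apply: NNPP => hx; apply/x_neq0/phi_inj => // j p hp.
rewrite embedding0 //; apply/eqP/contraT => hne.
by case: hx; exists j, p.
Qed.

End FreeEmbedding.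

Theorem lemma4p5 (V A : choiceType) (s t : A -> V) (k : fieldType)
  (inC : pred (word V A)) (I : kQ V A k -> Prop)
  (HC : @monomial_subcoalgebra V A s t k inC)
  (HI : @left_submodule V A t k inC I)
  (Hfree : @embeds_in_free V A t k inC I)
  (e : V) (He : I << trivial_path A e >>) :
  exists p : word V A, [/\ is_path s t p, inC p,
    (forall q : word V A, is_path s t q -> I << q >> -> psrc q = e ->
       exists p' : word V A, [/\ is_path s t p', inC p',
          ptgt t q = psrc p' & p = concat q p'])
  & (forall r : word V A, is_path s t r -> inC r -> nontrivial r ->
       ptgt t r = e -> ~~ inC (concat r p))].
Proof.
have [Hpath _ _ _] := HC; have [_ I0 _ _] := HI.
have [J [phi [_ phiD phi_act phi_inj]]] := Hfree.
have e_neq0 : << trivial_path A e >> != 0 :> kQ V A k.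
  apply/eqP => /(congr1 (mcoeff (trivial_path A e))) /eqP.
  by rewrite mcoeff_unit eqxx mcoeff0 oner_eq0.
have [j [p [Cp phi_e_p]]] := embedding_neq0 I0 phiD phi_inj He e_neq0.
have factor q : I << q >> -> psrc q = e ->
    exists p', [/\ is_path s t p', inC p', ptgt t q = psrc p' & p = concat q p'].
  move=> Iq qe; move: phi_e_p.
  rewrite -qe -(act_delta_unit t k q) (phi_act _ _ Iq j p Cp).
  case/dual_mul_delta_neq0 => xy hxy xyq.
  have [_ Cxy2] := monomial_splits_inC HC Cp hxy.
  have [hsrc hcat] := splitsP hxy; rewrite -xyq.
  by exists xy.2; split; rewrite ?hcat //; apply: Hpath.
have p_src : psrc p = e by have [p' [_ _ _ ->]] := factor _ He erefl.
exists p; split => //; [exact: Hpath | by move=> q _; apply: factor |].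
move=> r _ _ r_nontriv r_tgt; apply/negP => Crp; move/eqP: phi_e_p; apply.
have := phi_act (delta k r) _ He j _ Crp.
by rewrite act_delta_trivial // (embedding0 I0 phiD) // dual_mul_delta_concat ?r_tgt.
Qed.
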